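(* Under (B.1), (B.2), (B.3), the minimax solution $\varphi$ of the problem $\partial_t\varphi+H(t,x(\cdot),\nabla\varphi)=0$ on $[0,T)\times C([-h,T],\mathbb{R}^n)$, $\varphi(T,x(\cdot))=\sigma(x(\cdot))$, is a viscosity solution, i.e. it satisfies: (V$^*$) for every $ci$-smooth $\psi:[0,T]\times C([-h,T],\mathbb{R}^n)\to\mathbb{R}$, if $\varphi-\psi$ attains a local minimum (with respect to the metric $\mathrm{dist}$) at a point $(t,x(\cdot))\in[0,T)\times C([-h,T],\mathbb{R}^n)$, then $\partial_t\psi(t,x(\cdot))+H(t,x(\cdot),\nabla\psi(t,x(\cdot)))\le0$; (V$_*$) for every $ci$-smooth $\psi$, if $\varphi-\psi$ attains a local maximum at a point $(t,x(\cdot))\in[0,T)\times C([-h,T],\mathbb{R}^n)$, then $\partial_t\psi(t,x(\cdot))+H(t,x(\cdot),\nabla\psi(t,x(\cdot)))\ge0$.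
   Context: Fix $n\in\mathbb{N}$, $h>0$, $T>0$; $\langle\cdot,\cdot\rangle$, $\|\cdot\|$ Euclidean. $C([-h,T],\mathbb{R}^n)$ has the sup norm $\|\cdot\|_{[-h,T]}$; $[0,T]\times C([-h,T],\mathbb{R}^n)$ has the metric $\mathrm{dist}((t,x(\cdot)),(\tau,y(\cdot)))=|t-\tau|+\|x(\cdot)-y(\cdot)\|_{[-h,T]}$. Non-anticipative: $\varphi(t,x(\cdot))=\varphi(t,y(\cdot))$ whenever $t\in[0,T)$ and $x=y$ on $[-h,t]$. $\mathrm{Lip}(t,x(\cdot))$: the $y(\cdot)\in C([-h,T],\mathbb{R}^n)$ with $y=x$ on $[-h,t]$, Lipschitz on $[t,T]$. $ci$-differentiable at $(t,x(\cdot))$, $t<T$: there exist $\partial_t\varphi(t,x(\cdot))\in\mathbb{R}$, $\nabla\varphi(t,x(\cdot))\in\mathbb{R}^n$ with $\varphi(\tau,y(\cdot))-\varphi(t,x(\cdot))=\partial_t\varphi(t,x(\cdot))(\tau-t)+\langle\nabla\varphi(t,x(\cdot)),y(\tau)-x(t)\rangle+o(\tau-t)$, $\tau\in(t,T]$, for every $y(\cdot)\in\mathrm{Lip}(t,x(\cdot))$, $o(\delta)/\delta\to0$ as $\delta\downarrow0$ ($o$ may depend on $y$). $ci$-smooth: continuous, $ci$-differentiable at every point of $[0,T)\times C([-h,T],\mathbb{R}^n)$, with $\partial_t\varphi$ and $\nabla\varphi$ continuous there. (B.1) $H,\sigma$ continuous; (B.2) there is $c>0$ with $|H(t,x(\cdot),s)-H(t,x(\cdot),r)|\le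 c(1+\max_{\tau\in[-h,t]}\|x(\tau)\|)\|s-r\|$ for all $t,x(\cdot),s,r$; (B.3) for every compact $D\subset C([-h,T],\mathbb{R}^n)$ there is $\lambda>0$ with $|H(t,x(\cdot),s)-H(t,y(\cdot),s)|\le\lambda(1+\|s\|)\max_{\tau\in[-h,t]}\|x(\tau)-y(\tau)\|$ for all $t\in[0,T]$, $x(\cdot),y(\cdot)\in D$, $s$. $Y(t,x(\cdot))$: the $y(\cdot)\in\mathrm{Lip}(t,x(\cdot))$ with $\|\dot y(\tau)\|\le c(1+\max_{\xi\in[-h,\tau]}\|y(\xi)\|)$ for a.e. $\tau\in[t,T]$. A minimax solution: $\varphi$ non-anticipative, continuous, $\varphi(T,\cdot)=\sigma$, and for every $(t,x(\cdot))\in[0,T)\times C([-h,T],\mathbb{R}^n)$, $s\in\mathbb{R}^n$ there is $y(\cdot)\in Y(t,x(\cdot))$ with $\varphi(\tau,y(\cdot))-\varphi(t,x(\cdot))=\langle s,y(\tau)-x(t)\rangle-\int_t^\tau H(\xi,y(\cdot),s)\,d\xi$ for all $\tau\in[t,T]$. *)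

From HB Require Import structures.
From mathcomp Require Import all_boot all_order all_algebra.
From mathcomp Require Import all_classical all_reals all_analysis.
From Stdlib Require List.
Set Implicit Arguments. Unset Strict Implicit. Unset Printing Implicit Defensive.
Import Order.TTheory GRing.Theory Num.Theory.
Import numFieldNormedType.Exports.
Local Open Scope classical_set_scope.
Local Open Scope ring_scope.

Section PathDefs.
Variables (R : realType) (n : nat) (h T : R).

Definition inner (u v : 'rV[R]_n) : R := \sum_(i < n) u ord0 i * v ord0 i.
Definition enorm (v : 'rV[R]_n) : R := Num.sqrt (inner v v).

(* Elements of C([-h,T],R^n) are represented by functions R -> R^n that are
   continuous on [-h,T] and constant outside of it (x s = x (clamp s)),
   so that they are in bijection with C([-h,T],R^n). *)
Definition clamp (s : R) : R := Num.max (- h) (Num.min s T).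

Definition admissible (x : R -> 'rV[R]_n) : Prop :=
  (forall s, x s = x (clamp s)) /\
  (forall s, - h <= s <= T -> forall e, 0 < e -> exists2 d, 0 < d &
     forall s', - h <= s' <= T -> `|s' - s| < d -> enorm (x s' - x s) < e).

Definition supdist (x y : R -> 'rV[R]_n) : R :=
  sup [set enorm (x s - y s) | s in [set s | - h <= s <= T]].

Definition dist (t : R) (x : R -> 'rV[R]_n) (tau : R) (y : R -> 'rV[R]_n) : R :=
  `|t - tau| + supdist x y.

Definition maxnorm_upto (x : R -> 'rV[R]_n) (t : R) : R :=
  sup [set enorm (x s) | s in [set s | - h <= s <= t]].

Definition maxdist_upto (x y : R -> 'rV[R]_n) (t : R) : R :=
  sup [set enorm (x s - y s) | s in [set s | - h <= s <= t]].

Definition cont_functional (phi : R -> (R -> 'rV[R]_n) -> R) : Prop :=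
  forall t x, 0 <= t <= T -> admissible x ->
  forall e, 0 < e -> exists2 d, 0 < d &
    forall tau y, 0 <= tau <= T -> admissible y -> dist t x tau y < d ->
      `|phi tau y - phi t x| < e.

Definition cont_functional_open (phi : R -> (R -> 'rV[R]_n) -> R) : Prop :=
  forall t x, 0 <= t < T -> admissible x ->
  forall e, 0 < e -> exists2 d, 0 < d &
    forall tau y, 0 <= tau < T -> admissible y -> dist t x tau y < d ->
      `|phi tau y - phi t x| < e.

Definition cont_functional_vec_open (g : R -> (R -> 'rV[R]_n) -> 'rV[R]_n) : Prop :=
  forall t x, 0 <= t < T -> admissible x ->
  forall e, 0 < e -> exists2 d, 0 < d &
    forall tau y, 0 <= tau < T -> admissible y -> dist t x tau y < d ->
      enorm (g tau y - g t x) < e.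

Definition non_anticipative (phi : R -> (R -> 'rV[R]_n) -> R) : Prop :=
  forall t x y, 0 <= t < T -> admissible x -> admissible y ->
    (forall s, - h <= s <= t -> x s = y s) -> phi t x = phi t y.

Definition Lip (t : R) (x y : R -> 'rV[R]_n) : Prop :=
  admissible y /\ (forall s, - h <= s <= t -> y s = x s) /\
  exists L : R, forall s1 s2, t <= s1 <= T -> t <= s2 <= T ->
    enorm (y s1 - y s2) <= L * `|s1 - s2|.

Definition ci_diff_at (psi : R -> (R -> 'rV[R]_n) -> R) (t : R)
    (x : R -> 'rV[R]_n) (dt : R) (g : 'rV[R]_n) : Prop :=
  forall y, Lip t x y ->
  forall e, 0 < e -> exists2 d, 0 < d &
    forall tau, t < tau <= T -> tau - t < d ->
      `|psi tau y - psi t x - dt * (tau - t) - inner g (y tau - x t)|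
        <= e * (tau - t).

Definition ci_smooth (psi : R -> (R -> 'rV[R]_n) -> R)
    (dt_psi : R -> (R -> 'rV[R]_n) -> R)
    (grad_psi : R -> (R -> 'rV[R]_n) -> 'rV[R]_n) : Prop :=
  cont_functional psi /\
  (forall t x, 0 <= t < T -> admissible x ->
     ci_diff_at psi t x (dt_psi t x) (grad_psi t x)) /\
  cont_functional_open dt_psi /\ cont_functional_vec_open grad_psi.

Definition Yset (c : R) (t : R) (x y : R -> 'rV[R]_n) : Prop :=
  Lip t x y /\
  exists N : set R, (@lebesgue_measure R).-negligible N /\
    forall tau, t <= tau <= T -> ~ N tau ->
      derivable y tau 1 /\
      enorm ('D_1 y tau) <= c * (1 + maxnorm_upto y tau).

Definition openC (U : set (R -> 'rV[R]_n)) : Prop :=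
  forall x, admissible x -> U x -> exists2 r, 0 < r &
    forall y, admissible y -> supdist x y < r -> U y.

Definition compactC (D : set (R -> 'rV[R]_n)) : Prop :=
  (forall x, D x -> admissible x) /\
  forall (I : Type) (U : I -> set (R -> 'rV[R]_n)),
    (forall i, openC (U i)) -> (forall x, D x -> exists i, U i x) ->
    exists s : seq I, forall x, D x -> exists i, List.In i s /\ U i x.

Definition B1 (H : R -> (R -> 'rV[R]_n) -> 'rV[R]_n -> R)
    (sigma : (R -> 'rV[R]_n) -> R) : Prop :=
  (forall t x s, 0 <= t <= T -> admissible x ->
    forall e, 0 < e -> exists2 d, 0 < d &
      forall tau y r, 0 <= tau <= T -> admissible y ->
        dist t x tau y + enorm (r - s) < d -> `|H tau y r - H t x s| < e) /\
  (forall x, admissible x -> forall e, 0 < e -> exists2 d, 0 < d &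
      forall y, admissible y -> supdist x y < d -> `|sigma y - sigma x| < e).

Definition B2 (c : R) (H : R -> (R -> 'rV[R]_n) -> 'rV[R]_n -> R) : Prop :=
  forall t x s r, 0 <= t <= T -> admissible x ->
    `|H t x s - H t x r| <= c * (1 + maxnorm_upto x t) * enorm (s - r).

Definition B3 (H : R -> (R -> 'rV[R]_n) -> 'rV[R]_n -> R) : Prop :=
  forall D, compactC D -> exists2 lam, 0 < lam &
    forall t x y s, 0 <= t <= T -> D x -> D y ->
      `|H t x s - H t y s| <= lam * (1 + enorm s) * maxdist_upto x y t.

Definition minimax_solution (c : R) (H : R -> (R -> 'rV[R]_n) -> 'rV[R]_n -> R)
    (sigma : (R -> 'rV[R]_n) -> R) (phi : R -> (R -> 'rV[R]_n) -> R) : Prop :=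
  non_anticipative phi /\ cont_functional phi /\
  (forall x, admissible x -> phi T x = sigma x) /\
  (forall t x s, 0 <= t < T -> admissible x ->
    exists y, Yset c t x y /\
      forall tau, t <= tau <= T ->
        phi tau y - phi t x =
          inner s (y tau - x t) - Rintegral (@lebesgue_measure R)
                                     [set xi | t <= xi <= tau] (fun xi => H xi y s)).

Definition local_min_at (f : R -> (R -> 'rV[R]_n) -> R) (t : R) (x : R -> 'rV[R]_n) :=
  exists2 d, 0 < d & forall tau y, 0 <= tau <= T -> admissible y ->
    dist t x tau y < d -> f t x <= f tau y.

Definition local_max_at (f : R -> (R -> 'rV[R]_n) -> R) (t : R) (x : R -> 'rV[R]_n) :=
  exists2 d, 0 < d & forall tau y, 0 <= tau <= T -> admissible y ->
    dist t x tau y < d -> f tau y <= f t x.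

End PathDefs.

From mathcomp Require Import all_boot all_order all_algebra.
From mathcomp Require Import all_classical all_reals all_analysis.
From mathcomp Require Import ring lra.
Import Order.TTheory GRing.Theory Num.Theory.
Import numFieldNormedType.Exports.
Set Implicit Arguments.
Unset Strict Implicit.
Local Open Scope classical_set_scope.
Local Open Scope ring_scope.

(* Let psi be ci-smooth, t < T, a = dt psi (t,x), g = grad psi (t,x) and
   K = a + H(t,x,g).  Applying the minimax property with s = g gives a path
   y in Lip(t,x) along which
     phi(tau,y) - phi(t,x) = <g, y(tau) - x(t)> - int_t^tau H(xi,y,g) dxi.
   The path y may stay far from x in the sup norm, so we replace it by its
   freezing at tau, z_tau = x + (y - x)(min(., tau)): z_tau agrees with y up
   to tau and tends to x as tau decreases to t.  Since phi, psi and H only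
   see the past (for psi this follows from ci-differentiability, for H from
   (B.3) applied to the compact set {x, y}), the ci-expansion of psi along y
   and the continuity of H in time (B.1) give
     (phi - psi)(tau, z_tau) - (phi - psi)(t, x) = - K (tau - t) + o(tau - t).
   At a local minimum (resp. maximum) of phi - psi the left-hand side is
   nonnegative (resp. nonpositive), whence K <= 0 (resp. K >= 0). *)

(* Splits on every comparison hidden in Num.min / Num.max (innermost first)
   and closes each case by linear arithmetic. *)
Ltac minmax_lra :=
  rewrite ?minEle ?maxEle;
  repeat match goal with |- context [if ?a <= ?b then _ else _] =>
    lazymatch a with context [if _ then _ else _] => fail | _ =>
    lazymatch b with context [if _ then _ else _] => fail | _ =>
    case: (leP a b) => ? /= end end end;
  lra.

Section RealLine.
Variable R : realFieldType.
Implicit Types a b s t tau : R.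

Lemma clamp_id [a b s] : a <= s <= b -> Num.max a (Num.min s b) = s.
Proof. by move=> /andP[a_s s_b]; rewrite min_l // max_r. Qed.

Lemma clamp_in a b s : a <= b -> a <= Num.max a (Num.min s b) <= b.
Proof. by move=> ab; apply/andP; split; minmax_lra. Qed.

Lemma min_in [a b s tau] : a <= s <= b -> a <= tau <= b -> a <= Num.min s tau <= b.
Proof. move=> /andP[? ?] /andP[? ?]; apply/andP; split; minmax_lra. Qed.

Lemma min_lip a b s : `|Num.min a s - Num.min b s| <= `|a - b|.
Proof.
have := ler_norm (a - b); have := ler_norm (b - a); rewrite distrC ler_norml.
move=> ? ?; apply/andP; split; minmax_lra.
Qed.

Lemma max_lip a b s : `|Num.max s a - Num.max s b| <= `|a - b|.
Proof.
have := ler_norm (a - b); have := ler_norm (b - a); rewrite distrC ler_norml.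
move=> ? ?; apply/andP; split; minmax_lra.
Qed.

Lemma increment_combine (py px qy qx a Hy IN IY e w : R) : py - px = IN - IY ->
  `|qy - qx - a * w - IN| <= e / 2 * w -> `|IY - Hy * w| <= e / 2 * w ->
  `|py - qy - (px - qx) + (a + Hy) * w| <= e * w.
Proof.
move=> p_eq q_exp I_exp.
have -> : py - qy - (px - qx) + (a + Hy) * w = - (qy - qx - a * w - IN) - (IY - Hy * w).
  by rewrite -[py](subrK px) p_eq; ring.
apply: (le_trans (ler_normB _ _)); rewrite normrN.
have -> : e * w = e / 2 * w + e / 2 * w by field.
exact: lerD.
Qed.

Lemma expansion_sign_le (D K e w : R) : 0 < w -> 0 <= D ->
  `|D + K * w| <= e * w -> K <= 0 + e.
Proof.
move=> w0 D0; rewrite ler_norml add0r => /andP[_ up].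
by rewrite -(ler_pM2r w0); lra.
Qed.

Lemma expansion_sign_ge (D K e w : R) : 0 < w -> D <= 0 ->
  `|D + K * w| <= e * w -> 0 <= K + e.
Proof.
move=> w0 D0; rewrite ler_norml => /andP[low _].
by rewrite -(ler_pM2r w0) mul0r; lra.
Qed.

End RealLine.

Section EuclideanNorm.
Variables (R : realType) (n : nat).
Implicit Types u v g : 'rV[R]_n.

Lemma enorm_ge0 v : 0 <= enorm v.
Proof. exact: sqrtr_ge0. Qed.

Lemma enorm0 : enorm (0 : 'rV[R]_n) = 0.
Proof. by rewrite /enorm /inner big1 ?sqrtr0 // => i _; rewrite mxE mulr0. Qed.

Lemma enormN v : enorm (- v) = enorm v.
Proof.
by rewrite /enorm /inner; congr Num.sqrt; apply: eq_bigr => i _; rewrite !mxE mulrNN.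
Qed.

Lemma coord_le_enorm v i : `|v ord0 i| <= enorm v.
Proof.
have sq_ge0 j : 0 <= v ord0 j * v ord0 j by rewrite -expr2 sqr_ge0.
rewrite -sqrtr_sqr /enorm ler_sqrt; last exact: sumr_ge0.
by rewrite expr2 /inner (bigD1 i) //= lerDl sumr_ge0.
Qed.

(* The Euclidean norm is dominated by the l1 norm; this yields a triangle
   inequality up to the factor n, which is all the proof needs. *)
Lemma enorm_le_l1 v : enorm v <= \sum_(i < n) `|v ord0 i|.
Proof.
have S0 : 0 <= \sum_(i < n) `|v ord0 i| by exact: sumr_ge0.
rewrite -(ger0_norm S0) -sqrtr_sqr /enorm ler_sqrt ?sqr_ge0 // expr2 mulr_sumr.
apply: ler_sum => i _; rewrite -[v ord0 i * _]ger0_norm ?normrM -?expr2 ?sqr_ge0 //.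
by rewrite ler_wpM2r // (bigD1 i) //= lerDl sumr_ge0.
Qed.

Lemma enormD u v : enorm (u + v) <= n%:R * (enorm u + enorm v).
Proof.
apply: (le_trans (enorm_le_l1 _)).
have -> : n%:R * (enorm u + enorm v) = \sum_(i < n) (enorm u + enorm v).
  by rewrite sumr_const card_ord mulr_natl.
apply: ler_sum => i _; rewrite mxE; apply: (le_trans (ler_normD _ _)).
by apply: lerD; apply: coord_le_enorm.
Qed.

Lemma inner_le g v : `|inner g v| <= (\sum_(i < n) `|g ord0 i|) * enorm v.
Proof.
rewrite /inner mulr_suml; apply: (le_trans (ler_norm_sum _ _ _)).
by apply: ler_sum => i _; rewrite normrM ler_wpM2l // coord_le_enorm.
Qed.

End EuclideanNorm.

Section RealAnalysis.
Variable R : realType.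
Implicit Types a b s t tau : R.
Local Notation mu := (@lebesgue_measure R).

Lemma sup_le_img (F : R -> R) a b B : a <= b ->
  (forall s, a <= s <= b -> F s <= B) ->
  sup [set F s | s in [set s | a <= s <= b]] <= B.
Proof.
move=> ab FB; apply: ge_sup; first by exists (F a), a => //=; rewrite lexx ab.
by move=> _ [s hs <-]; exact: FB.
Qed.

Lemma sup_img0 (F : R -> R) a b : a <= b ->
  (forall s, a <= s <= b -> F s = 0) ->
  sup [set F s | s in [set s | a <= s <= b]] = 0.
Proof.
move=> ab F0; suff -> : [set F s | s in [set s | a <= s <= b]] = [set 0] by exact: sup1.
apply/seteqP; split; first by move=> _ [s hs <-]; rewrite /= F0.
by move=> _ ->; exists a; rewrite /= ?F0 ?lexx ?ab.
Qed.

Lemma near_right_of t b (P : R -> Prop) : t < b ->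
  (exists2 d, 0 < d & forall s, t < s <= b -> s - t < d -> P s) ->
  \forall s \near t^'+, P s.
Proof.
move=> tb [d d0 Pd]; near=> s; apply: Pd; [apply/andP; split|]; near: s.
- exact: nbhs_right_gt.
- exact: nbhs_right_le.
- exact: nbhs_right_ltDr.
Unshelve. all: by end_near. Qed.

Lemma Rintegral_near_const (f : R -> R) t tau K e : t <= tau -> continuous f ->
  (forall xi, t <= xi <= tau -> `|f xi - K| <= e) ->
  `|Rintegral mu [set xi | t <= xi <= tau] f - K * (tau - t)| <= e * (tau - t).
Proof.
move=> t_tau f_cont fK.
have -> : [set xi | t <= xi <= tau] = `[t, tau]%classic.
  by apply/seteqP; split => x /=; rewrite in_itv.
have mI : measurable (`[t, tau]%classic : set R) by exact: measurable_itv.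
have cont_int g : continuous g -> mu.-integrable `[t, tau]%classic (EFin \o g).
  move=> g_cont; apply: continuous_compact_integrable; first exact: segment_compact.
  exact: continuous_subspaceT.
have muI : fine (mu `[t, tau]%classic) = tau - t.
  rewrite lebesgue_measure_itv /=; case: ltP => [_|]; first by rewrite -EFinD.
  by rewrite lee_fin => tau_t; apply/eqP; rewrite eq_sym subr_eq0 eq_le tau_t t_tau.
have cst_cont : forall k : R, continuous (fun _ : R => k).
  by move=> k; exact: cst_continuous.
have fK_cont : continuous (fun x => f x - K).
  by move=> x; exact: (continuousB (f_cont x) (cst_cont K x)).
rewrite -muI -Rintegral_cst // -RintegralB //; last exact: cont_int.
apply: (le_trans (le_normr_Rintegral _ _)) => //; first exact: cont_int.
rewrite -Rintegral_cst //; apply: le_Rintegral => //.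
- apply: cont_int => x; apply: (continuous_comp (f := fun x => f x - K)).
    exact: fK_cont.
  exact: norm_continuous.
- exact: cont_int.
- exact: cont_int.
Qed.

End RealAnalysis.

Section Viscosity.
Variables (R : realType) (n : nat) (h T : R).
Hypotheses (h_ge0 : 0 <= h) (T_gt0 : 0 < T).
Implicit Types (x y z : R -> 'rV[R]_n) (s t tau : R).

Lemma past_le t : 0 <= t -> - h <= t.
Proof. by move=> t0; rewrite (le_trans _ t0) // oppr_le0. Qed.

Definition path_continuous x : Prop :=
  forall s, - h <= s <= T -> forall e, 0 < e -> exists2 d, 0 < d &
    forall s', - h <= s' <= T -> `|s' - s| < d -> enorm (x s' - x s) < e.

Lemma path_continuousD x y : path_continuous x -> path_continuous y ->
  path_continuous (fun s => x s + y s).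
Proof.
move=> x_cont y_cont s hs e e0.
set N : R := n%:R; have N0 : 0 <= N := ler0n _ _.
set e1 := e / (2 * N + 1); have e10 : 0 < e1 by rewrite divr_gt0 //; lra.
have e1E : e1 * (2 * N + 1) = e by rewrite mulfVK //; lra.
have [dx dx0 hx] := x_cont s hs e1 e10.
have [dy dy0 hy] := y_cont s hs e1 e10.
exists (Num.min dx dy); first by rewrite lt_min dx0 dy0.
move=> s' hs'; rewrite lt_min => /andP[s'dx s'dy].
have := hx s' hs' s'dx; have := hy s' hs' s'dy.
rewrite opprD addrACA => ? ?; apply: (le_lt_trans (enormD _ _)); rewrite -/N.
have := enorm_ge0 (x s' - x s); have := enorm_ge0 (y s' - y s); nra.
Qed.

Lemma path_continuousN x : path_continuous x -> path_continuous (fun s => - x s).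
Proof.
move=> x_cont s hs e e0; have [d d0 hd] := x_cont s hs e e0.
by exists d => // s' hs' s'd; rewrite -opprD enormN; apply: hd.
Qed.

Lemma path_continuous_stop x tau : path_continuous x -> - h <= tau <= T ->
  path_continuous (fun s => x (Num.min s tau)).
Proof.
move=> x_cont htau s hs e e0; have [d d0 hd] := x_cont _ (min_in hs htau) e e0.
exists d => // s' hs' s'd; apply: hd; first exact: min_in.
exact: le_lt_trans (min_lip _ _ _) s'd.
Qed.

Lemma supdist_self y : supdist h T y y = 0.
Proof.
rewrite /supdist; apply: (sup_img0 (F := fun s => enorm (y s - y s))).
  exact/past_le/ltW.
by move=> s _; rewrite subrr enorm0.
Qed.

Definition freeze x y tau : R -> 'rV[R]_n :=
  fun s => x s + (y (Num.min s tau) - x (Num.min s tau)).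

Lemma freeze_before x y tau s : s <= tau -> freeze x y tau s = y s.
Proof. by move=> s_tau; rewrite /freeze min_l // addrC subrK. Qed.

Lemma freeze_admissible x y tau : admissible h T x -> admissible h T y ->
  - h <= tau <= T -> admissible h T (freeze x y tau).
Proof.
move=> [x_clamp x_cont] [y_clamp y_cont] htau; split.
  have stop_clamp (w : R -> 'rV[R]_n) (s : R) : (forall s, w s = w (clamp h T s)) ->
      w (Num.min s tau) = w (Num.min (clamp h T s) tau).
    move=> w_clamp; rewrite w_clamp [RHS]w_clamp /clamp.
    by congr w; move: htau => /andP[? ?]; minmax_lra.
  by move=> s; rewrite /freeze (x_clamp s) (stop_clamp _ _ y_clamp) (stop_clamp _ _ x_clamp).
change (path_continuous (freeze x y tau)).
apply: (path_continuousD x_cont).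
apply: (path_continuous_stop (x := fun s => y s - x s)) htau.
exact: path_continuousD y_cont (path_continuousN x_cont).
Qed.

Lemma freeze_Lip t x y tau : admissible h T x -> Lip h T t x y ->
  t <= tau <= T -> Lip h T tau (freeze x y tau) y.
Proof.
move=> ax [ay [y_x [L y_Lip]]] /andP[t_tau tau_T]; split=> //; split.
  by move=> s /andP[_ s_tau]; rewrite freeze_before.
by exists L => s1 s2 /andP[? ?] /andP[? ?]; apply: y_Lip; apply/andP; split; lra.
Qed.

Lemma freeze_dist_near t x y : admissible h T x -> admissible h T y -> 0 <= t < T ->
  (forall s, - h <= s <= t -> y s = x s) ->
  forall d, 0 < d -> \forall tau \near t^'+, dist h T t x tau (freeze x y tau) < d.
Proof.
move=> ax ay /andP[t0 tT] y_x d d0.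
have ht : - h <= t <= T by rewrite past_le // ltW.
have d2_gt0 : 0 < d / 2 by lra.
have [r r0 hr] := path_continuousD ay.2 (path_continuousN ax.2) ht d2_gt0.
have yx_t : y t - x t = 0 by rewrite y_x ?subrr // lexx andbT; lra.
near=> tau.
have t_tau : t < tau by near: tau; exact: nbhs_right_gt.
have tau_T : tau <= T by near: tau; exact: nbhs_right_le.
have tau_r : tau - t < r by near: tau; exact: nbhs_right_ltDr.
have tau_d : tau - t < d / 2 by near: tau; exact: nbhs_right_ltDr.
have htau : - h <= tau <= T by apply/andP; split; lra.
have : supdist h T x (freeze x y tau) <= d / 2.
  apply: sup_le_img; first lra.
  move=> s hs; rewrite /freeze opprD addrA subrr add0r enormN.
  have hm := min_in hs htau; set m := Num.min s tau in hm *.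
  have m_tau : m <= tau by rewrite ge_min lexx orbT.
  case: (leP m t) => [m_t | t_m].
    by rewrite y_x ?subrr ?enorm0; [lra | case/andP: hm => -> _].
  apply/ltW; move: (hr m hm); rewrite /= yx_t subr0; apply.
  by rewrite ger0_norm; lra.
by rewrite /dist distrC ger0_norm; lra.
Unshelve. all: by end_near. Qed.

Lemma cont_functional_right_lim psi tau y : cont_functional h T psi ->
  0 <= tau < T -> admissible h T y -> psi s y @[s --> tau^'+] --> psi tau y.
Proof.
move=> psi_cont /andP[tau0 tauT] ay; apply/cvgrPdist_le => e e0.
have htau : 0 <= tau <= T by rewrite tau0 ltW.
have [d d0 hd] := psi_cont tau y htau ay e e0.
apply: (near_right_of tauT); exists d => // s /andP[tau_s s_T] s_d.
rewrite distrC; apply/ltW/hd => //; first by apply/andP; split; lra.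
by rewrite /dist supdist_self addr0 distrC ger0_norm; lra.
Qed.

Lemma ci_diff_right_lim psi tau z y a g : ci_diff_at h T psi tau z a g ->
  0 <= tau < T -> Lip h T tau z y -> psi s y @[s --> tau^'+] --> psi tau z.
Proof.
move=> psi_diff /andP[tau0 tauT] yLip; have [_ [y_z [L y_Lip]]] := yLip.
have z_tau : z tau = y tau by rewrite y_z // past_le // lexx.
set G := \sum_(i < n) `|g ord0 i|; have G0 : 0 <= G by exact: sumr_ge0.
set C := 1 + `|a| + G * `|L|.
have C0 : 0 < C by rewrite /C; have := normr_ge0 a; have := normr_ge0 L; nra.
have rem_near := near_right_of tauT (psi_diff y yLip 1 ltr01).
rewrite z_tau in rem_near.
apply/cvgrPdist_le => e e0; near=> s.
have tau_s : tau < s by near: s; exact: nbhs_right_gt.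
have s_T : s <= T by near: s; exact: nbhs_right_le.
have s_e : s - tau < e / C by near: s; apply: nbhs_right_ltDr; exact: divr_gt0.
have rem : `|psi s y - psi tau z - a * (s - tau) - inner g (y s - y tau)|
    <= 1 * (s - tau) by near: s; exact: rem_near.
have lin : `|inner g (y s - y tau)| <= G * `|L| * (s - tau).
  apply: (le_trans (inner_le _ _)); rewrite -mulrA ler_wpM2l //.
  have hs : tau <= s <= T by apply/andP; split; lra.
  have htau : tau <= tau <= T by rewrite lexx ltW.
  have := y_Lip s tau hs htau; rewrite ger0_norm; last lra.
  have := ler_norm L; have := enorm_ge0 (y s - y tau); nra.
have a_s : `|a * (s - tau)| = `|a| * (s - tau).
  by rewrite normrM [`|s - tau|]ger0_norm // subr_ge0 (ltW tau_s).
have sC : (s - tau) * C < e by rewrite -ltr_pdivlMr.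
rewrite distrC.
have -> : psi s y - psi tau z = (psi s y - psi tau z - a * (s - tau) - inner g (y s - y tau))
   + a * (s - tau) + inner g (y s - y tau) by ring.
apply: (le_trans (ler_normD _ _)); apply: (le_trans (lerD (ler_normD _ _) (lexx _))).
rewrite a_s; move: rem lin sC; rewrite /C; nra.
Unshelve. all: by end_near. Qed.

(* ci-smooth functionals are non-anticipative along Lipschitz continuations:
   both right limits above must agree. *)
Lemma ci_smooth_past psi dt gr tau z y : ci_smooth h T psi dt gr ->
  0 <= tau < T -> admissible h T z -> Lip h T tau z y -> psi tau y = psi tau z.
Proof.
move=> [psi_cont [psi_diff _]] htau az yLip.
have lim_y := cont_functional_right_lim psi_cont htau yLip.1.
have lim_z := ci_diff_right_lim (psi_diff tau z htau az) htau yLip.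
exact: norm_cvg_unique lim_y lim_z.
Qed.

Lemma compactC_pair x y : admissible h T x -> admissible h T y ->
  compactC h T [set w | w = x \/ w = y].
Proof.
move=> ax ay; split; first by move=> w [->|->].
move=> I U _ cover.
have [ix Ux] := cover x (or_introl erefl); have [iy Uy] := cover y (or_intror erefl).
by exists [:: ix; iy] => w [->|->]; [exists ix | exists iy]; split => //=; tauto.
Qed.

Variables (c : R) (H : R -> (R -> 'rV[R]_n) -> 'rV[R]_n -> R)
  (sigma : (R -> 'rV[R]_n) -> R) (phi : R -> (R -> 'rV[R]_n) -> R).
Hypotheses (hB1 : B1 h T H sigma) (hB3 : B3 h T H)
  (phi_minimax : minimax_solution h T c H sigma phi).

(* By (B.3), H(t, x, g) only depends on the restriction of x to [-h, t]. *)
Lemma H_past t x y g : 0 <= t <= T -> admissible h T x -> admissible h T y ->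
  (forall s, - h <= s <= t -> y s = x s) -> H t y g = H t x g.
Proof.
move=> ht ax ay y_x.
have [lam _ H_lip] := hB3 (compactC_pair ax ay).
have := H_lip t y x g ht (or_intror erefl) (or_introl erefl).
suff -> : maxdist_upto h y x t = 0 by rewrite mulr0 normr_le0 subr_eq0 => /eqP.
rewrite /maxdist_upto; apply: (sup_img0 (F := fun s => enorm (y s - x s))).
  by rewrite past_le //; case/andP: ht.
by move=> s hs; rewrite y_x // subrr enorm0.
Qed.

Lemma H_clamped_continuous y g : admissible h T y ->
  continuous (fun xi => H (Num.max 0 (Num.min xi T)) y g).
Proof.
move=> ay xi; apply/cvgrPdist_lt => e e0.
have [d d0 hd] := hB1.1 _ y g (clamp_in xi (ltW T_gt0)) ay e e0.
near=> xi'; rewrite distrC; apply: hd => //; first exact/clamp_in/ltW.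
rewrite /dist supdist_self addr0 subrr enorm0 addr0.
apply: (le_lt_trans (max_lip _ _ _)); apply: (le_lt_trans (min_lip _ _ _)).
by near: xi'; apply/nbhs_normP; exists d.
Unshelve. all: by end_near. Qed.

Lemma H_integral_near t y g : 0 <= t < T -> admissible h T y ->
  forall e, 0 < e -> \forall tau \near t^'+,
  `|Rintegral (@lebesgue_measure R) [set xi | t <= xi <= tau] (fun xi => H xi y g)
    - H t y g * (tau - t)| <= e * (tau - t).
Proof.
move=> /andP[t0 tT] ay e e0.
have ht : 0 <= t <= T by rewrite t0 ltW.
have [d d0 hd] := hB1.1 t y g ht ay e e0.
near=> tau.
have t_tau : t < tau by near: tau; exact: nbhs_right_gt.
have tau_T : tau <= T by near: tau; exact: nbhs_right_le.
have tau_d : tau - t < d by near: tau; exact: nbhs_right_ltDr.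
rewrite (@eq_Rintegral _ _ _ (@lebesgue_measure R) _
    (fun xi => H (Num.max 0 (Num.min xi T)) y g)); last first.
  by move=> xi; rewrite inE /= => /andP[? ?]; rewrite clamp_id //; apply/andP; split; lra.
apply: Rintegral_near_const; [lra | exact: H_clamped_continuous |].
move=> xi /andP[t_xi xi_tau]; rewrite clamp_id; last by apply/andP; split; lra.
apply/ltW/hd => //; first by apply/andP; split; lra.
by rewrite /dist supdist_self addr0 subrr enorm0 addr0 distrC ger0_norm; lra.
Unshelve. all: by end_near. Qed.

Lemma freeze_expansion psi dt gr t x : ci_smooth h T psi dt gr ->
  0 <= t < T -> admissible h T x -> forall e d, 0 < e -> 0 < d ->
  exists tau z, [/\ 0 <= tau <= T, admissible h T z, dist h T t x tau z < d, t < tau &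
    `|(phi tau z - psi tau z) - (phi t x - psi t x) + (dt t x + H t x (gr t x)) * (tau - t)|
      <= e * (tau - t)].
Proof.
move=> psi_smooth ht ax e d e0 d0; have /andP[t0 tT] := ht.
have [phi_na [_ [_ phi_char]]] := phi_minimax.
set g := gr t x.
have [y [[yLip _] y_char]] := phi_char t x g ht ax.
have [ay [y_x _]] := yLip.
have e2 : 0 < e / 2 by lra.
have H_yx : H t y g = H t x g by apply: H_past => //; rewrite t0 ltW.
have psi_near := near_right_of tT (psi_smooth.2.1 t x ht ax y yLip _ e2).
have int_near := H_integral_near g ht ay e2.
have dist_near := freeze_dist_near ax ay ht y_x d0.
suff /filter_ex [tau ?] : \forall tau \near t^'+,
  [/\ 0 <= tau <= T, admissible h T (freeze x y tau),
      dist h T t x tau (freeze x y tau) < d, t < tau &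
    `|(phi tau (freeze x y tau) - psi tau (freeze x y tau)) - (phi t x - psi t x)
       + (dt t x + H t x g) * (tau - t)| <= e * (tau - t)].
  by exists tau, (freeze x y tau).
near=> tau.
have t_tau : t < tau by near: tau; exact: nbhs_right_gt.
have tau_T : tau < T by near: tau; exact: nbhs_right_lt.
have az : admissible h T (freeze x y tau).
  by apply: freeze_admissible; rewrite // past_le ?(ltW tau_T) //; lra.
have phi_z : phi tau (freeze x y tau) = phi tau y.
  apply: phi_na => //; first by apply/andP; split; lra.
  by move=> s /andP[_ s_tau]; rewrite freeze_before.
have psi_z : psi tau (freeze x y tau) = psi tau y.
  apply/esym/(ci_smooth_past psi_smooth) => //; first by apply/andP; split; lra.
  by apply: (freeze_Lip ax yLip); apply/andP; split; lra.
split => //; [by apply/andP; split; lra | by near: tau |].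
rewrite phi_z psi_z; apply: (increment_combine (y_char tau _)).
- by apply/andP; split; lra.
- by near: tau.
- by rewrite -H_yx; near: tau.
Unshelve. all: by end_near. Qed.

End Viscosity.

Theorem proposition10 (R : realType) (n : nat) (h T c : R)
  (H : R -> (R -> 'rV[R]_n) -> 'rV[R]_n -> R)
  (sigma : (R -> 'rV[R]_n) -> R)
  (phi : R -> (R -> 'rV[R]_n) -> R) :
  0 < h -> 0 < T -> 0 < c ->
  B1 h T H sigma -> B2 h T c H -> B3 h T H ->
  minimax_solution h T c H sigma phi ->
  (forall (psi dt_psi : R -> (R -> 'rV[R]_n) -> R)
          (grad_psi : R -> (R -> 'rV[R]_n) -> 'rV[R]_n) t x,
     ci_smooth h T psi dt_psi grad_psi ->
     0 <= t < T -> admissible h T x ->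
     local_min_at h T (fun tau y => phi tau y - psi tau y) t x ->
     dt_psi t x + H t x (grad_psi t x) <= 0) /\
  (forall (psi dt_psi : R -> (R -> 'rV[R]_n) -> R)
          (grad_psi : R -> (R -> 'rV[R]_n) -> 'rV[R]_n) t x,
     ci_smooth h T psi dt_psi grad_psi ->
     0 <= t < T -> admissible h T x ->
     local_max_at h T (fun tau y => phi tau y - psi tau y) t x ->
     0 <= dt_psi t x + H t x (grad_psi t x)).
Proof.
move=> h0 T0 _ hB1 _ hB3 phi_minimax.
have expansion := freeze_expansion (ltW h0) T0 hB1 hB3 phi_minimax.
split=> psi dt gr t x psi_smooth ht ax [d d0 extremum];
  apply/ler_addgt0Pr => e e0;
  have [tau [z [htau az dist_z t_tau bound]]] := expansion _ _ _ _ _ psi_smooth ht ax e d e0 d0.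
- apply: (expansion_sign_le _ _ bound); first by rewrite subr_gt0.
  by rewrite subr_ge0; exact: extremum.
- apply: (expansion_sign_ge _ _ bound); first by rewrite subr_gt0.
  by rewrite subr_le0; exact: extremum.
Qed.
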